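(* Let $\Sigma$ be a non-pure shellable rational pointed fan in $\mathbb{R}^d$ with non-pure shelling $C_1,\dots,C_s$. Then there exists a permutation $\sigma$ of $\{1,\dots,s\}$ such that $C_{\sigma(1)},\dots,C_{\sigma(s)}$ is a non-pure shelling of $\Sigma$ and $\dim C_{\sigma(1)}\ge\dots\ge\dim C_{\sigma(s)}$.
   Context: A rational pointed fan $\Sigma$ in $\mathbb{R}^d$ is a finite collection of rational pointed polyhedral cones closed under taking faces, such that the intersection of two cones of $\Sigma$ is a common face of both. Facets are maximal cones. For a cone $C$, $\mathrm{fan}(C)$ is the fan of all faces of $C$ and $\mathrm{fan}(\partial C)$ the fan of all proper faces of $C$. A shelling of a pure $k$-dimensional fan is a linear ordering $C_1,\dots,C_s$ of its facets such that either $k=0$, or: (1) $\mathrm{fan}(\partial C_1)$ has a shelling, and (2) for $1<j\le s$ the fan $\mathrm{fan}(\partial C_j)$ is pure $(k-1)$-dimensional and there is a shelling $D_1,\dots,D_{t_j}$ of $\mathrm{fan}(\partial C_j)$ with $\emptyset\neq\bigcup_{i=1}^{j-1}[\mathrm{fan}(C_i)\cap\mathrm{fan}(C_j)]=\bigcup_{l=1}^{r_j}\mathrm{fan}(D_l)$ for some $1\le r_j\le t_j$. A (not necessarily pure) fan $\Sigma$ is non-pure shellable if there is a linear ordering $C_1,\dots,C_s$ of its facets (a non-pure shelling) such that either $\dim\Sigma=0$, or: (1) $\mathrm{fan}(\partial C_1)$ has a shelling, and (2) for $1<j\le s$ there is a shelling $D_1,\dots,D_{t_j}$ of the pure fan $\mathrm{fan}(\partial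 C_j)$ with $\emptyset\neq\bigcup_{i=1}^{j-1}[\mathrm{fan}(C_i)\cap\mathrm{fan}(C_j)]=\bigcup_{l=1}^{r_j}\mathrm{fan}(D_l)$ for some $1\le r_j\le t_j$. *)

(* Rational pointed fans in R^d, modelled by their rational points in Q^d. *)
From mathcomp Require Import all_boot all_order all_algebra.
From Stdlib Require Import ClassicalEpsilon.
Set Implicit Arguments. Unset Strict Implicit. Unset Printing Implicit Defensive.
Import Order.TTheory GRing.Theory Num.Theory.
Local Open Scope ring_scope.

Section Fans.
Variable d : nat.

Definition vec := 'rV[rat]_d.
Definition cone := vec -> Prop.
Definition fanT := cone -> Prop.

Definition dotv (w x : vec) : rat := \sum_(i < d) w 0 i * x 0 i.

Definition cone_gen (S : seq vec) : cone :=
  fun x => exists lam : 'I_(size S) -> rat,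
    (forall i, 0 <= lam i) /\ x = \sum_(i < size S) lam i *: nth 0 S i.

Definition is_ratcone (C : cone) : Prop := exists S : seq vec, C = cone_gen S.

Definition pointed (C : cone) : Prop := forall x, C x -> C (- x) -> x = 0.

Definition face (F C : cone) : Prop :=
  exists w : vec, (forall x, C x -> 0 <= dotv w x) /\
                  F = (fun x => C x /\ dotv w x = 0).

Definition fanof (C : cone) : fanT := fun F => face F C.
Definition bdry (C : cone) : fanT := fun F => face F C /\ F <> C.

Definition is_dim (C : cone) (n : nat) : Prop :=
  (exists s : seq vec, size s = n /\ (forall x, x \in s -> C x) /\ free s) /\
  (forall s : seq vec, (forall x, x \in s -> C x) -> free s -> (size s <= n)%N).
Definition cdim (C : cone) : nat := epsilon (inhabits 0%N) (is_dim C).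

Definition is_fan (Sg : fanT) : Prop :=
  (exists l : seq cone, forall C, Sg C <-> List.In C l) /\
  (forall C, Sg C -> is_ratcone C /\ pointed C) /\
  (forall C F, Sg C -> face F C -> Sg F) /\
  (forall C D, Sg C -> Sg D ->
     face (fun x => C x /\ D x) C /\ face (fun x => C x /\ D x) D).

Definition facet (Sg : fanT) (C : cone) : Prop :=
  Sg C /\ forall D, Sg D -> (forall x, C x -> D x) -> D = C.

Definition pure_dim (Sg : fanT) (k : nat) : Prop :=
  (exists C, facet Sg C) /\ forall C, facet Sg C -> cdim C = k.

Definition facet_order (Sg : fanT) (s : nat) (C : 'I_s -> cone) : Prop :=
  injective C /\ (forall i, facet Sg (C i)) /\
  (forall F, facet Sg F -> exists i, C i = F).

Definition glue (s : nat) (C : 'I_s -> cone) (j : 'I_s)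
    (t : nat) (D : 'I_t -> cone) (r : nat) : Prop :=
  (exists F, exists i : 'I_s, (i < j)%N /\ face F (C i) /\ face F (C j)) /\
  (forall F, (exists i : 'I_s, (i < j)%N /\ face F (C i) /\ face F (C j)) <->
             (exists l : 'I_t, (l < r)%N /\ face F (D l))).

(* shelling of a pure k-dimensional fan (0-indexed) *)
Fixpoint shelling (k : nat) (Sg : fanT) (s : nat) (C : 'I_s -> cone) {struct k}
  : Prop :=
  pure_dim Sg k /\ facet_order Sg C /\
  match k with
  | 0 => True
  | k'.+1 =>
      (forall h : (0 < s)%N,
          exists t (D : 'I_t -> cone), shelling k' (bdry (C (Ordinal h))) D) /\
      (forall j : 'I_s, (0 < j)%N ->
          pure_dim (bdry (C j)) k' /\
          exists t (D : 'I_t -> cone), shelling k' (bdry (C j)) D /\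
            exists r, (1 <= r <= t)%N /\ glue C j D r)
  end.

Definition nonpure_shelling (Sg : fanT) (s : nat) (C : 'I_s -> cone) : Prop :=
  facet_order Sg C /\
  ((forall F, Sg F -> cdim F = 0%N) \/
   ((forall h : (0 < s)%N, exists t (D : 'I_t -> cone),
        shelling (cdim (C (Ordinal h))).-1 (bdry (C (Ordinal h))) D) /\
    (forall j : 'I_s, (0 < j)%N ->
        exists t (D : 'I_t -> cone), shelling (cdim (C j)).-1 (bdry (C j)) D /\
          exists r, (1 <= r <= t)%N /\ glue C j D r))).

End Fans.

(** Bubble sort.  Suppose C_j comes right before C_(j+1) in a non-pure
    shelling and dim C_j < dim C_(j+1).  The cones glued onto C_(j+1) are
    facets of its boundary, of dimension dim C_(j+1) - 1 >= dim C_j, so none of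
    them can be a face of C_j: they all lie in cones strictly before C_j.
    Hence every common face of C_j and C_(j+1) already lies in an earlier cone,
    the gluing sets of both cones are unchanged when they are swapped, and the
    swap is again a non-pure shelling.  Each such swap decreases
    sum_i i * dim C_i, so finitely many swaps sort the cones by dimension. *)
From mathcomp Require Import all_boot all_order all_algebra all_fingroup.
From mathcomp Require Import zify.
From Stdlib Require Import Classical ClassicalEpsilon.
From Stdlib Require Import FunctionalExtensionality PropExtensionality.
Set Implicit Arguments. Unset Strict Implicit. Unset Printing Implicit Defensive.
Import GRing.Theory.

Section AdjacentSwaps.
Variable s : nat.

Lemma adjacent_sorted (f : 'I_s -> nat) :
  (forall j j' : 'I_s, j' = j.+1 :> nat -> f j' <= f j) ->
  forall i j : 'I_s, i <= j -> f j <= f i.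
Proof.
move=> adj_le.
suff le_shift : forall k (i j : 'I_s), j = i + k :> nat -> f j <= f i.
  by move=> i j le_ij; apply: (le_shift (j - i)); lia.
move=> k i; elim: k => [|k IHk] j ej.
  by rewrite (_ : j = i) //; apply: val_inj; rewrite /= ej addn0.
have lt_pred : j.-1 < s by have := ltn_ord j; lia.
by apply: leq_trans (adj_le (Ordinal lt_pred) j _) (IHk _ _) => /=; lia.
Qed.

Definition position_weight (f : 'I_s -> nat) := \sum_(i < s) i * f i.

Lemma position_weight_swap (f : 'I_s -> nat) (j j' : 'I_s) :
  j' = j.+1 :> nat -> f j < f j' ->
  position_weight (fun i => f (tperm j j' i)) < position_weight f.
Proof.
move=> adj lt_f; rewrite /position_weight.
rewrite (reindex_inj (@perm_inj _ (tperm j j'))) /=.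
under eq_bigr => i _ do rewrite tpermK.
have neq_jj' : j != j' by apply/eqP => /(congr1 val) /=; lia.
have split_jj' (g : 'I_s -> nat) :
    \sum_(i < s) g i = g j + g j' + \sum_(i < s | (i != j) && (i != j')) g i.
  by rewrite (bigD1 j) //= (bigD1 j') 1?eq_sym //= addnA.
rewrite split_jj' [X in _ < X]split_jj' tpermL tpermR.
under eq_bigr => i /andP [ne_ij ne_ij'] do rewrite tpermD 1?eq_sym //.
rewrite ltn_add2r; nia.
Qed.

Lemma sort_by_adjacent_swaps (f : 'I_s -> nat) (P : {perm 'I_s} -> Prop) :
  P 1%g ->
  (forall (sg : {perm 'I_s}) (j j' : 'I_s), j' = j.+1 :> nat ->
     f (sg j) < f (sg j') -> P sg -> P (tperm j j' * sg)%g) ->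
  exists sg : {perm 'I_s}, P sg /\ forall i j : 'I_s, i <= j -> f (sg j) <= f (sg i).
Proof.
move=> P1 P_swap.
suff sort_below : forall n (sg : {perm 'I_s}),
    position_weight (fun i => f (sg i)) < n -> P sg ->
    exists sg' : {perm 'I_s}, P sg' /\ forall i j : 'I_s, i <= j -> f (sg' j) <= f (sg' i).
  exact: sort_below _ 1%g (ltnSn _) P1.
elim=> // n IHn sg lt_n Psg.
have [/existsP [j /existsP [j' /andP [/eqP adj inv]]] | no_inv] :=
  boolP [exists j : 'I_s, exists j' : 'I_s, (j' == j.+1 :> nat) && (f (sg j) < f (sg j'))].
  apply: (IHn (tperm j j' * sg)%g); last exact: P_swap.
  have -> : position_weight (fun i => f ((tperm j j' * sg)%g i)) =
            position_weight (fun i => f (sg (tperm j j' i))).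
    by apply: eq_bigr => i _; rewrite permM.
  have := position_weight_swap (f := fun i => f (sg i)) adj inv; lia.
exists sg; split=> //; apply: (adjacent_sorted (f := fun i => f (sg i))) => j j' adj.
rewrite leqNgt; apply: contra no_inv => inv.
by apply/existsP; exists j; apply/existsP; exists j'; rewrite adj eqxx.
Qed.

End AdjacentSwaps.

Section Cones.
Variable d : nat.
Local Open Scope ring_scope.

Lemma cone_ext (A B : cone d) : (forall x, A x <-> B x) -> A = B.
Proof.
move=> AB; apply: functional_extensionality => x.
exact: propositional_extensionality.
Qed.

Lemma face_sub (F C : cone d) x : face F C -> F x -> C x.
Proof. by case=> w [_ ->] []. Qed.

Lemma dotv0l (x : vec d) : dotv 0 x = 0.
Proof. by rewrite /dotv big1 // => i _; rewrite mxE mul0r. Qed.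

Lemma face_refl (C : cone d) : face C C.
Proof.
exists 0; split=> [x _|]; first by rewrite dotv0l.
by apply: cone_ext => x; rewrite dotv0l; split=> [|[]].
Qed.

Lemma dotv_sumr n (a : 'I_n -> rat) (v : 'I_n -> vec d) w :
  dotv w (\sum_(k < n) a k *: v k) = \sum_(k < n) a k * dotv w (v k).
Proof.
rewrite /dotv; under eq_bigr => i _ do rewrite summxE big_distrr /=.
rewrite exchange_big /=; apply: eq_bigr => k _.
by rewrite big_distrr /=; apply: eq_bigr => i _; rewrite mxE mulrCA.
Qed.

Lemma free_size_le (vs : seq (vec d)) : free vs -> (size vs <= d)%N.
Proof.
rewrite /free => /eqP <-.
by have := dimvS (subvf <<vs>>%VS); rewrite dimvf dim_matrix mul1r.
Qed.

Lemma is_dim_exists (C : cone d) : exists n, is_dim C n.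
Proof.
pose has_free n :=
  exists vs : seq (vec d), size vs = n /\ (forall x, x \in vs -> C x) /\ free vs.
pose has_freeb n : bool := excluded_middle_informative (has_free n).
have has_freebP n : has_freeb n <-> has_free n.
  by rewrite /has_freeb; case: excluded_middle_informative.
have has_free0 : exists n, has_freeb n.
  by exists 0%N; apply/has_freebP; exists [::]; rewrite /free span_nil dimv0.
have has_free_le n : has_freeb n -> (n <= d)%N.
  by move=> /has_freebP [vs [<- [_ /free_size_le]]].
have [m /has_freebP has_free_m max_m] := ex_maxnP has_free0 has_free_le.
exists m; split=> // vs vsC free_vs; apply: max_m; apply/has_freebP.
by exists vs.
Qed.

Lemma cdimP (C : cone d) : is_dim C (cdim C).
Proof. exact: epsilon_spec (is_dim_exists C). Qed.

Lemma cdim_proper_face (F C : cone d) : face F C -> F <> C -> (cdim F < cdim C)%N.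
Proof.
move=> faceFC neFC.
have [x [Cx notFx]] : exists x, C x /\ ~ F x.
  apply: NNPP => noX; apply: neFC; apply: cone_ext => x; split; first exact: face_sub.
  by move=> Cx; apply: NNPP => notFx; apply: noX; exists x.
have [w [w_ge0 defF]] := faceFC.
have wx_neq0 : dotv w x != 0 by apply/eqP => wx0; apply: notFx; rewrite defF.
have [[vs [<- [vsF free_vs]]] _] := cdimP F.
have [_ dimC_max] := cdimP C.
apply: (dimC_max (x :: vs)).
  by move=> y; rewrite inE => /predU1P [-> // | /vsF]; apply: face_sub.
rewrite free_cons free_vs andbT; apply/negP => x_in_span.
have w_vs (i : 'I_(size vs)) : dotv w (in_tuple vs)`_i = 0.
  have : F (in_tuple vs)`_i by apply/vsF/mem_nth.
  by rewrite defF => -[].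
move: wx_neq0; rewrite (coord_span (X := in_tuple vs) x_in_span) dotv_sumr.
by rewrite big1 ?eqxx // => i _; rewrite w_vs mulr0.
Qed.

Lemma shelling_pure_order k (Sg : fanT d) t (D : 'I_t -> cone d) :
  shelling k Sg D -> pure_dim Sg k /\ facet_order Sg D.
Proof. by case: k => [|k] [? [? _]]. Qed.

Definition earlier_face s (C : 'I_s -> cone d) (j : 'I_s) (F : cone d) : Prop :=
  exists i : 'I_s, (i < j)%N /\ face F (C i) /\ face F (C j).

Lemma glue_congr s s' (C : 'I_s -> cone d) (C' : 'I_s' -> cone d) j j'
    t (D : 'I_t -> cone d) r :
  (forall F, earlier_face C j F <-> earlier_face C' j' F) ->
  glue C j D r -> glue C' j' D r.
Proof.
move=> eqCC' [[F /eqCC' earlierF] glueCD]; split; first by exists F.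
by move=> G; split=> [/eqCC'/glueCD | /glueCD/eqCC'].
Qed.

End Cones.

Section Swap.
Variables (d s : nat) (C : 'I_s -> cone d) (j j' : 'I_s).
Hypotheses (adj : j' = j.+1 :> nat) (j_gt0 : (0 < j)%N).
Hypothesis common_earlier : forall G, face G (C j) -> face G (C j') ->
  exists i : 'I_s, (i < j)%N /\ face G (C i).

Lemma tperm_fix_lt (i : 'I_s) : (i < j)%N -> tperm j j' i = i.
Proof. by move=> lt_ij; rewrite tpermD //; apply/eqP => /(congr1 val) /=; lia. Qed.

Lemma tperm_gt0 (k : 'I_s) : (0 < k)%N -> (0 < tperm j j' k)%N.
Proof. by case: tpermP => // ->; rewrite adj. Qed.

Lemma earlier_face_swap k F :
  earlier_face (fun i => C (tperm j j' i)) k F <-> earlier_face C (tperm j j' k) F.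
Proof.
have lt_j' (i : 'I_s) : (i < j)%N -> (i < j')%N by rewrite adj ltnS => /ltnW.
have [-> | ne_kj] := eqVneq k j; first rewrite tpermL.
  split=> [[i [lt_ij [faceFi faceFj']]] | [i [lt_ij' [faceFi faceFj']]]].
    rewrite tperm_fix_lt // in faceFi; rewrite tpermL in faceFj'.
    by exists i; split; first exact: lt_j'.
  have [lt_ij | le_ji] := ltnP i j.
    by exists i; rewrite /= tperm_fix_lt // tpermL.
  have eq_ij : i = j by apply: val_inj => /=; lia.
  rewrite eq_ij in faceFi; have [i' [lt_i'j faceFi']] := common_earlier faceFi faceFj'.
  by exists i'; rewrite /= tperm_fix_lt // tpermL.
have [-> | ne_kj'] := eqVneq k j'; first rewrite tpermR.
  split=> [[i [lt_ij' [faceFi faceFj]]] | [i [lt_ij [faceFi faceFj]]]].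
    rewrite tpermR in faceFj.
    have [lt_ij | le_ji] := ltnP i j.
      by rewrite tperm_fix_lt // in faceFi; exists i.
    have eq_ij : i = j by apply: val_inj => /=; lia.
    rewrite eq_ij tpermL in faceFi.
    have [i' [lt_i'j faceFi']] := common_earlier faceFj faceFi.
    by exists i'.
  by exists i; rewrite /= tperm_fix_lt // tpermR; split; first exact: lt_j'.
have tperm_k : tperm j j' k = k by rewrite tpermD // eq_sym.
have tperm_lt_k i : (tperm j j' i < k)%N = (i < k)%N.
  case: tpermP => [-> | -> | //]; move: ne_kj ne_kj';
    by rewrite -!(inj_eq val_inj) /=; lia.
rewrite tperm_k; split=> [[i [lt_ik faceFs]] | [i [lt_ik faceFs]]].
  by rewrite tperm_k in faceFs; exists (tperm j j' i); rewrite tperm_lt_k.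
by exists ((tperm j j')^-1 i)%g; rewrite /= permKV tperm_k -tperm_lt_k permKV.
Qed.

End Swap.

Section Fans.
Variables (d : nat) (Sg : fanT d).

Lemma facet_face_eq (A B : cone d) : facet Sg A -> Sg B -> face A B -> B = A.
Proof. by move=> [_ maxA] SgB faceAB; apply: maxA => // x; apply: face_sub. Qed.

Lemma facet_order_perm s (C : 'I_s -> cone d) (tau : {perm 'I_s}) :
  facet_order Sg C -> facet_order Sg (fun i => C (tau i)).
Proof.
move=> [injC [facetC ontoC]]; split; first by move=> i i' /injC /perm_inj.
split=> // F /ontoC [i <-].
by exists (tau^-1 i)%g; rewrite permKV.
Qed.

Hypothesis fanSg : is_fan Sg.

Lemma fan_face (C F : cone d) : Sg C -> face F C -> Sg F.
Proof. exact: fanSg.2.2.1. Qed.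

Lemma face_of_subset (G C : cone d) :
  Sg G -> Sg C -> (forall x, G x -> C x) -> face G C.
Proof.
move=> SgG SgC subGC; have [_ faceGC] := fanSg.2.2.2 _ _ SgG SgC.
suff <- : (fun x => G x /\ C x) = G by [].
by apply: cone_ext => x; split=> [[] | Gx] //; split=> //; apply: subGC.
Qed.

Section Inversion.
Variables (s : nat) (C : 'I_s -> cone d) (j j' : 'I_s).
Hypotheses (orderC : facet_order Sg C) (adj : j' = j.+1 :> nat).
Hypothesis inv : (cdim (C j) < cdim (C j'))%N.
Variables (t : nat) (D : 'I_t -> cone d) (r : nat).
Hypotheses (shellD : shelling (cdim (C j')).-1 (bdry (C j')) D) (glueD : glue C j' D r).

Lemma glued_facet_earlier (l : 'I_t) :
  (l < r)%N -> exists i : 'I_s, (i < j)%N /\ face (D l) (C i).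
Proof.
move=> lt_lr; have [[_ pureD] [_ [facetD _]]] := shelling_pure_order shellD.
have [i [lt_ij' [faceDi _]]] := (glueD.2 (D l)).2 (ex_intro _ l (conj lt_lr (face_refl _))).
exists i; split; last by [].
have [eq_ij | ne_ij] := eqVneq i j; last by move: ne_ij; rewrite -(inj_eq val_inj) /=; lia.
rewrite eq_ij in faceDi; exfalso.
have [eq_DC | ne_DC] := classic (D l = C j); last first.
  by have := cdim_proper_face faceDi ne_DC; rewrite (pureD _ (facetD l)); lia.
have faceCj : face (C j) (C j') by rewrite -eq_DC; case: (facetD l) => -[].
have /orderC.1 eq_jj' := facet_face_eq (orderC.2.1 j) (orderC.2.1 j').1 faceCj.
by move: adj; rewrite eq_jj'; lia.
Qed.

Hypothesis r_range : (1 <= r <= t)%N.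

Lemma inversion_index_gt0 : (0 < j)%N.
Proof.
have [r_gt0 le_rt] := andP r_range.
have [i [lt_ij _]] := @glued_facet_earlier (Ordinal (leq_trans r_gt0 le_rt)) r_gt0.
by apply: leq_ltn_trans lt_ij.
Qed.

Lemma common_face_earlier G : face G (C j) -> face G (C j') ->
  exists i : 'I_s, (i < j)%N /\ face G (C i).
Proof.
move=> faceGj faceGj'.
have lt_jj' : (j < j')%N by rewrite adj.
have [l [lt_lr faceGl]] := (glueD.2 G).1 (ex_intro _ j (conj lt_jj' (conj faceGj faceGj'))).
have [i [lt_ij faceDi]] := glued_facet_earlier lt_lr.
exists i; split=> //; apply: face_of_subset.
- exact: fan_face (orderC.2.1 j).1 faceGj.
- exact: (orderC.2.1 i).1.
by move=> x /(face_sub faceGl) /(face_sub faceDi).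
Qed.

End Inversion.

Definition glued_shelling s (C : 'I_s -> cone d) : Prop :=
  facet_order Sg C /\
  (forall h : (0 < s)%N, exists t (D : 'I_t -> cone d),
     shelling (cdim (C (Ordinal h))).-1 (bdry (C (Ordinal h))) D) /\
  (forall j : 'I_s, (0 < j)%N ->
     exists t (D : 'I_t -> cone d), shelling (cdim (C j)).-1 (bdry (C j)) D /\
       exists r, (1 <= r <= t)%N /\ glue C j D r).

Lemma glued_shelling_swap s (C : 'I_s -> cone d) (j j' : 'I_s) :
  glued_shelling C -> j' = j.+1 :> nat -> (cdim (C j) < cdim (C j'))%N ->
  glued_shelling (fun i => C (tperm j j' i)).
Proof.
move=> [orderC [shell_first shell_later]] adj inv.
have j'_gt0 : (0 < j')%N by rewrite adj.
have [t [D [shellD [r [r_range glueD]]]]] := shell_later j' j'_gt0.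
have j_gt0 := inversion_index_gt0 orderC adj inv shellD glueD r_range.
have common := common_face_earlier orderC adj inv shellD glueD.
split; first exact: facet_order_perm.
split=> [s_gt0 | k k_gt0].
  by rewrite tperm_fix_lt //; apply: shell_first.
have [t' [D' [shellD' [r' [r'_range glueD']]]]] := shell_later _ (tperm_gt0 adj j_gt0 k_gt0).
exists t', D'; split=> //; exists r'; split=> //.
apply: glue_congr glueD' => F; apply: iff_sym.
exact: earlier_face_swap adj j_gt0 common k F.
Qed.

End Fans.

Theorem lemma3p3 (d : nat) (Sg : fanT d) (s : nat) (C : 'I_s -> cone d) :
  is_fan Sg -> nonpure_shelling Sg C ->
  exists sigma : {perm 'I_s},
    nonpure_shelling Sg (fun i => C (sigma i)) /\
    (forall i j : 'I_s, (i <= j)%N -> (cdim (C (sigma j)) <= cdim (C (sigma i)))%N).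
Proof.
move=> fanSg [orderC [all_dim0 | glued]].
  exists 1%g; split=> [|i j _]; last by rewrite !all_dim0 //; apply: (orderC.2.1 _).1.
  by split; [apply: facet_order_perm | left].
pose P (sg : {perm 'I_s}) := glued_shelling Sg (fun i => C (sg i)).
have P1 : P 1%g.
  rewrite /P; suff -> : (fun i => C ((1 : {perm 'I_s})%g i)) = C by [].
  by apply: functional_extensionality => i; rewrite perm1.
have P_swap (sg : {perm 'I_s}) (j j' : 'I_s) : j' = j.+1 :> nat ->
    (cdim (C (sg j)) < cdim (C (sg j')))%N -> P sg -> P (tperm j j' * sg)%g.
  move=> adj inv /(glued_shelling_swap fanSg) /(_ adj inv); rewrite /P.
  suff -> : (fun i => C ((tperm j j' * sg)%g i)) = (fun i => C (sg (tperm j j' i))) by [].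
  by apply: functional_extensionality => i; rewrite permM.
have [sg [[orderC_sg glued_sg] sorted_sg]] :=
  sort_by_adjacent_swaps (f := fun i => cdim (C i)) P1 P_swap.
by exists sg; split=> //; split=> //; right.
Qed.
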